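(* The function $\check J$ is continuous on $\mathcal M_T$.
   Context: Fix integers $n,m,T\ge 1$, a scalar $\varepsilon>0$, matrices $A_k\in\mathbb R^{n\times n}$, $B_k\in\mathbb R^{n\times m}$ ($k=0,\dots,T-1$), and symmetric positive definite matrices $R_k\in\mathbb R^{m\times m}$, $\Sigma_{w_k}\in\mathbb R^{n\times n}$ ($k=0,\dots,T-1$), $F,\Sigma_{x_{\mathrm{ini}}}\in\mathbb R^{n\times n}$. Let $\mathcal M_T=(\mathbb S^m_{\succeq 0})^T$ with $\mathbb S^m_{\succeq0}$ the symmetric PSD $m\times m$ matrices; $\Sigma^{1/2}$ the PSD square root, $|\cdot|$ the determinant. For $(\Sigma_{\rho_0},\dots,\Sigma_{\rho_{T-1}})\in\mathcal M_T$ define backwards $\Pi_T=F$, $C_k=(R_k+B_k^\top\Pi_{k+1}B_k)/\varepsilon$, $\Pi_k=A_k^\top\Pi_{k+1}A_k-\frac1\varepsilon A_k^\top\Pi_{k+1}B_k\Sigma_{\rho_k}^{1/2}(I+\Sigma_{\rho_k}^{1/2}C_k\Sigma_{\rho_k}^{1/2})^{-1}\Sigma_{\rho_k}^{1/2}B_k^\top\Pi_{k+1}A_k$, $\Sigma_{Q_k}=\varepsilon(R_k+B_k^\top\Pi_{k+1}B_k)^{-1}$, and $\check J(\Sigma_{\rho_0},\dots,\Sigma_{\rho_{T-1}})=\frac12\Big[\mathrm{Tr}(\Pi_0\Sigma_{x_{\mathrm{ini}}})+\sum_{k=0}^{T-1}\Big(\varepsilon\log\frac{|\Sigma_{\rho_k}+\Sigma_{Q_k}|}{|\Sigma_{Q_k}|}+\mathrm{Tr}(\Pi_{k+1}\Sigma_{w_k})\Big)\Big]$.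 *)

From HB Require Import structures.
From mathcomp Require Import all_boot all_order all_algebra.
From mathcomp Require Import all_classical all_reals all_analysis.
Set Implicit Arguments. Unset Strict Implicit. Unset Printing Implicit Defensive.
Import Order.TTheory GRing.Theory Num.Theory.
Import numFieldNormedType.Exports.
Local Open Scope classical_set_scope.
Local Open Scope ring_scope.

Section Defs.
Variable R : realType.

Definition psd (p : nat) (S : 'M[R]_p) : Prop :=
  S^T = S /\ forall v : 'cV[R]_p, 0 <= (v^T *m S *m v) 0 0.
Definition pd (p : nat) (S : 'M[R]_p) : Prop :=
  S^T = S /\ forall v : 'cV[R]_p, v != 0 -> 0 < (v^T *m S *m v) 0 0.

Definition sqrtm (p : nat) (S : 'M[R]_p) : 'M[R]_p :=
  xget 0 [set X | psd X /\ X *m X = S].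

Definition MT (T m : nat) : set {ptws 'I_T -> 'M[R]_m} :=
  [set S | forall k : 'I_T, psd (S k)].

Definition at_nat (T : nat) (X : Type) (f : 'I_T -> X) (d : X) (k : nat) : X :=
  oapp f d (insub k).

Section Jcheck.
Variables (n m T : nat) (eps : R).
Variables (A : 'I_T -> 'M[R]_n) (B : 'I_T -> 'M[R]_(n, m))
          (Rk : 'I_T -> 'M[R]_m) (Sw : 'I_T -> 'M[R]_n) (F Sx : 'M[R]_n).
Variable Srho : 'I_T -> 'M[R]_m.

Let A_ := at_nat A 0.
Let B_ := at_nat B 0.
Let R_ := at_nat Rk 0.
Let W_ := at_nat Sw 0.
Let Sr_ := at_nat Srho 0.

(* C_k as a function of Pi_{k+1} *)
Definition Cmat (k : nat) (P : 'M[R]_n) : 'M[R]_m :=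
  eps^-1 *: (R_ k + (B_ k)^T *m P *m B_ k).

(* Pi_k from Pi_{k+1} = P *)
Definition Pi_step (k : nat) (P : 'M[R]_n) : 'M[R]_n :=
  let S := sqrtm (Sr_ k) in
  (A_ k)^T *m P *m A_ k
  - eps^-1 *: ((A_ k)^T *m P *m B_ k *m S
               *m invmx (1%:M + S *m Cmat k P *m S)
               *m S *m (B_ k)^T *m P *m A_ k).

Fixpoint Pi_rev (j : nat) : 'M[R]_n :=
  match j with
  | 0 => F
  | j'.+1 => Pi_step (T - j'.+1) (Pi_rev j')
  end.

Definition Pi (k : nat) : 'M[R]_n := Pi_rev (T - k).

Definition SigmaQ (k : nat) : 'M[R]_m :=
  eps *: invmx (R_ k + (B_ k)^T *m Pi k.+1 *m B_ k).

Definition Jcheck_val : R :=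
  2^-1 * (\tr (Pi 0 *m Sx)
          + \sum_(k < T) (eps * ln (\det (Sr_ k + SigmaQ k) / \det (SigmaQ k))
                          + \tr (Pi k.+1 *m W_ k))).
End Jcheck.

Definition Jcheck (n m T : nat) (eps : R)
  (A : 'I_T -> 'M[R]_n) (B : 'I_T -> 'M[R]_(n, m))
  (Rk : 'I_T -> 'M[R]_m) (Sw : 'I_T -> 'M[R]_n) (F Sx : 'M[R]_n)
  (Srho : {ptws 'I_T -> 'M[R]_m}) : R :=
  Jcheck_val eps A B Rk Sw F Sx Srho.

End Defs.

From HB Require Import structures.
From mathcomp Require Import all_boot all_order all_algebra.
From mathcomp Require Import all_classical all_reals all_analysis.
From mathcomp Require Import complex.
Set Implicit Arguments. Unset Strict Implicit. Unset Printing Implicit Defensive.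
Import Order.TTheory GRing.Theory Num.Theory.
Local Open Scope ring_scope.

(* The only non-algebraic ingredient of Jcheck is the PSD square root S of
   Sigma_rho_k, picked by choice and a priori not continuous.  For symmetric S and
   PSD C the intertwining (I + S^2 C) S = S (I + S C S) gives
   S (I + S C S)^-1 S = (I + S^2 C)^-1 S^2, so on M_T each Pi_k is a rational
   expression in Pi_{k+1} and Sigma_rho_k, continuous wherever the inverted
   matrices are invertible.  This holds, and the arguments of ln stay positive,
   because every Pi_k is PSD: eps (I + S C S) = G^T P G + M with G = B S and
   M = S R S + eps I, so the step P |-> Pi_k is a congruence of the Riccati update
   P - P G (G^T P G + M)^-1 G^T P, which is a sum of two congruences of P and M.
   Hence R_k + B^T Pi B, Sigma_Q and Sigma_rho + Sigma_Q are positive definite.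
   The PSD square root itself exists by the spectral theorem. *)

Section SymmetricDiagonalization.
Variable R : rcfType.

Lemma real_complexRe (x : R[i]) : x \is Num.real -> ((complex.Re x)%:C)%C = x.
Proof.
case: x => a b; rewrite realE => /orP[] h.
  by move: h; rewrite lecE => /andP[/eqP /= -> _].
by move: h; rewrite lecE => /andP[/eqP /= <- _].
Qed.

Lemma sym_mx_diagonalizable p (S : 'M[R]_p.+1) : S^T = S ->
  exists Q : 'M[R]_p.+1, exists d : 'rV[R]_p.+1,
    Q \in unitmx /\ Q *m S = diag_mx d *m Q.
Proof.
move=> S_sym; pose toC := real_complex R; pose Sc := map_mx toC S.
have Sc_real : Sc \is a realmx.
  by apply/mxOverP => i j; rewrite mxE; case: (lerP 0 (S i j)) => h;
    rewrite realE ?lecR ?h // (ltW h) orbT.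
have Sc_herm : Sc \is hermsymmx.
  apply: realsym_hermsym Sc_real; apply/is_hermitianmxP.
  by rewrite expr0 scale1r map_mx_id // /Sc map_trmx S_sym.
have d_real := hermitian_spectral_diag_real Sc_herm.
have /orthomx_spectralP Sc_spectral := hermitian_normalmx Sc_herm.
have Sc_sim : similar (spectralmx Sc) Sc (diag_mx (spectral_diag Sc)).
  by apply/similarP; rewrite ?spectral_unit // {2}Sc_spectral !mulmxA mulmxV
    ?spectral_unit // mul1mx.
have D_real : diag_mx (spectral_diag Sc) \is a realmx.
  apply/mxOverP => i j; rewrite mxE; case: (i == j); last by rewrite mulr0n real0.
  by rewrite mulr1n; move/mxOverP: d_real; apply.
have [Qc /andP[Qc_real Qc_unit] Qc_sim] := real_similar
  (ex_intro2 _ _ (spectralmx Sc) (spectral_unit Sc) Sc_sim) Sc_real D_real.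
pose Q := map_mx (@complex.Re R) Qc; pose d := map_mx (@complex.Re R) (spectral_diag Sc).
have QcE : Qc = map_mx toC Q.
  apply/matrixP => i j; rewrite !mxE /toC real_complexRe //.
  by move/mxOverP: Qc_real; apply.
have dE : spectral_diag Sc = map_mx toC d.
  apply/matrixP => i j; rewrite !mxE /toC real_complexRe //.
  by move/mxOverP: d_real; apply.
exists Q, d; split; first by rewrite -(map_unitmx toC) -QcE.
apply: (map_mx_inj (f := toC)).
by move/(similarP Qc_unit): Qc_sim; rewrite QcE dE -map_diag_mx -!map_mxM.
Qed.

End SymmetricDiagonalization.

Lemma poly_interpolation (F : fieldType) (s : seq F) (f : F -> F) :
  exists r : {poly F}, {in s, forall z, r.[z] = f z}.
Proof.
elim: s => [|z s [r r_s]]; first by exists 0.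
have [zs | zNs] := boolP (z \in s).
  by exists r => y; rewrite inE => /predU1P[->|]; [exact: r_s | exact: r_s].
pose q := \prod_(y <- s) ('X - y%:P).
have qz_neq0 : q.[z] != 0.
  rewrite horner_prod prodf_seq_neq0; apply/allP => y ys /=.
  by rewrite hornerXsubC subr_eq0; apply: contraNneq zNs => ->.
have q_s y : y \in s -> q.[y] = 0.
  by move=> ys; rewrite horner_prod (big_rem y ys) /= hornerXsubC subrr mul0r.
exists (r + ((f z - r.[z]) / q.[z]) *: q) => y; rewrite inE => /predU1P[->|ys].
  by rewrite hornerD hornerZ divfK // addrC subrK.
by rewrite hornerD hornerZ (q_s y ys) mulr0 addr0 r_s.
Qed.

Lemma trmx_horner_mx (R : comNzRingType) p (A : 'M[R]_p.+1) (r : {poly R}) :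
  (horner_mx A r)^T = horner_mx A^T r.
Proof.
elim/poly_ind: r => [|r c IHr]; first by rewrite !rmorph0 trmx0.
rewrite !rmorphD !rmorphM /= !horner_mx_X !horner_mx_C linearD /= tr_scalar_mx.
by rewrite trmx_mul IHr (comm_mx_horner r (erefl (A^T *m A^T))).
Qed.

Section SumOfSquares.
Variable R : realDomainType.

Lemma trmx_mul_self_ge0 p (v : 'cV[R]_p) : 0 <= (v^T *m v) 0 0.
Proof. by rewrite !mxE; apply: sumr_ge0 => i _; rewrite mxE -expr2 sqr_ge0. Qed.

Lemma trmx_mul_self_eq0 p (v : 'cV[R]_p) : (v^T *m v) 0 0 = 0 -> v = 0.
Proof.
rewrite !mxE => /eqP; rewrite psumr_eq0 => [/allP v0|i _]; last first.
  by rewrite mxE -expr2 sqr_ge0.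
apply/matrixP => i j; rewrite ord1 !mxE.
by have := v0 i (mem_index_enum i); rewrite /= mxE -expr2 sqrf_eq0 => /eqP.
Qed.

End SumOfSquares.

Section Psd.
Variable R : realType.
Implicit Types (p q : nat).

Lemma psd0 p : psd (0 : 'M[R]_p).
Proof. by split=> [|v]; rewrite ?trmx0 // mulmx0 mul0mx mxE. Qed.

Lemma pd_psd p (S : 'M[R]_p) : pd S -> psd S.
Proof.
case=> S_sym S_pos; split=> // v; have [->|/S_pos/ltW //] := eqVneq v 0.
by rewrite mulmx0 mxE.
Qed.

Lemma pd1 p : pd (1%:M : 'M[R]_p).
Proof.
split=> [|v v_neq0]; first exact: tr_scalar_mx.
rewrite mulmx1 lt_def trmx_mul_self_ge0 andbT.
by apply: contra_neq v_neq0; apply: trmx_mul_self_eq0.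
Qed.

Lemma psd_congruence p q (S : 'M[R]_p) (X : 'M[R]_(p, q)) :
  psd S -> psd (X^T *m S *m X).
Proof.
case=> S_sym S_pos; split; first by rewrite !trmx_mul trmxK S_sym mulmxA.
by move=> v; have := S_pos (X *m v); rewrite trmx_mul !mulmxA.
Qed.

Lemma psd_sym_conj p (X C : 'M[R]_p) : X^T = X -> psd C -> psd (X *m C *m X).
Proof. by move=> X_sym /(psd_congruence X); rewrite X_sym. Qed.

Lemma psdD p (S S' : 'M[R]_p) : psd S -> psd S' -> psd (S + S').
Proof.
case=> S_sym S_pos [S'_sym S'_pos]; split; first by rewrite linearD /= S_sym S'_sym.
by move=> v; rewrite mulmxDr mulmxDl mxE addr_ge0.
Qed.

Lemma pdD p (S S' : 'M[R]_p) : pd S -> psd S' -> pd (S + S').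
Proof.
case=> S_sym S_pos [S'_sym S'_pos]; split; first by rewrite linearD /= S_sym S'_sym.
by move=> v v_neq0; rewrite mulmxDr mulmxDl mxE ltr_pwDl ?S_pos.
Qed.

Lemma psdZ p (c : R) (S : 'M[R]_p) : 0 <= c -> psd S -> psd (c *: S).
Proof.
move=> c_ge0 [S_sym S_pos]; split; first by rewrite linearZ /= S_sym.
by move=> v; rewrite -scalemxAr -scalemxAl mxE mulr_ge0.
Qed.

Lemma pdZ p (c : R) (S : 'M[R]_p) : 0 < c -> pd S -> pd (c *: S).
Proof.
move=> c_gt0 [S_sym S_pos]; split; first by rewrite linearZ /= S_sym.
by move=> v v_neq0; rewrite -scalemxAr -scalemxAl mxE mulr_gt0 ?S_pos.
Qed.

Lemma pd_unitmx p (S : 'M[R]_p) : pd S -> S \in unitmx.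
Proof.
case=> _ S_pos; rewrite unitmxE unitfE; apply/negP => /det0P[u u_neq0 uS0].
have uT_neq0 : u^T != 0 by rewrite -trmx0 (inj_eq trmx_inj).
by have := S_pos _ uT_neq0; rewrite trmxK uS0 mul0mx mxE ltxx.
Qed.

Lemma unitmx_add1_psd p (S : 'M[R]_p) : psd S -> 1%:M + S \in unitmx.
Proof. by move=> S_psd; apply/pd_unitmx/pdD => //; exact: pd1. Qed.

Lemma pd_invmx p (S : 'M[R]_p) : pd S -> pd (invmx S).
Proof.
move=> S_pd; have S_unit := pd_unitmx S_pd; case: S_pd => S_sym S_pos.
split=> [|v v_neq0]; first by rewrite trmx_inv S_sym.
have w_neq0 : invmx S *m v != 0.
  by apply: contra_neq v_neq0 => w0; rewrite -(mulKVmx S_unit v) w0 mulmx0.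
have := S_pos _ w_neq0.
by rewrite trmx_mul trmx_inv S_sym -!mulmxA (mulKVmx S_unit) mulmxA.
Qed.

Lemma psd_sqrt_exists p (S : 'M[R]_p) : psd S -> exists X, psd X /\ X *m X = S.
Proof.
case: p S => [S _|p S [S_sym S_pos]].
  by exists 0; split; [exact: psd0 | apply/matrixP => -[]].
have [Q [d [Q_unit QS]]] := sym_mx_diagonalizable S_sym.
have d_ge0 i : 0 <= d 0 i.
  pose u := row i Q.
  have uS : u *m S = d 0 i *: u.
    by rewrite /u -row_mul QS row_mul row_diag_mx -scalemxAl -rowE.
  have u_neq0 : u^T != 0.
    rewrite -trmx0 (inj_eq trmx_inj); apply/eqP => u0.
    have := congr1 (row i) (mulmxV Q_unit).
    rewrite row_mul -/u u0 mul0mx row1 => /rowP/(_ i)/eqP.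
    by rewrite !mxE !eqxx eq_sym oner_eq0.
  have u_pos : 0 < (u *m u^T) 0 0.
    rewrite -[u in u *m _]trmxK lt_def trmx_mul_self_ge0 andbT.
    by apply: contra_neq u_neq0; apply: trmx_mul_self_eq0.
  by have := S_pos u^T; rewrite trmxK uS -scalemxAl mxE pmulr_lge0.
(* [r] interpolates t |-> t^(1/4) on the spectrum; [Y = r(S)] is symmetric, so
   [Y *m Y = Y^T *m Y] is PSD, and [(Y *m Y)^2 = r^4(S) = S]. *)
have [r r_d] := poly_interpolation [seq d 0 i | i <- enum 'I_p.+1]
  (fun x => Num.sqrt (Num.sqrt x)).
pose Y := horner_mx S r.
have Y_sym : Y^T = Y by rewrite /Y trmx_horner_mx S_sym.
exists (Y *m Y); split; first split.
- by rewrite trmx_mul Y_sym.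
- by move=> v; rewrite -{1}Y_sym mulmxA -mulmxA -trmx_mul; apply: trmx_mul_self_ge0.
have SE : S = invmx Q *m diag_mx d *m Q by rewrite -mulmxA -QS mulKmx.
have -> : Y *m Y *m (Y *m Y) = horner_mx S (r ^+ 4).
  by rewrite rmorphXn /= -/Y !exprS expr0 mulr1 -!mulmxA.
rewrite [in RHS]SE {1}SE horner_mx_uconjC // horner_mx_diag; congr (_ *m _ *m _).
apply/matrixP => i j; rewrite !mxE; case: (i == j) => //=; rewrite !mulr1n.
rewrite horner_exp r_d; last by apply: map_f; rewrite mem_enum.
by rewrite -[4%N]/(2 * 2)%N exprM sqr_sqrtr ?sqrtr_ge0 // sqr_sqrtr.
Qed.

Lemma sqrtmP p (S : 'M[R]_p) : psd S -> psd (sqrtm S) /\ sqrtm S *m sqrtm S = S.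
Proof.
by move=> S_psd; apply: (xgetPex 0 (P := [set X | psd X /\ X *m X = S]));
  exact: psd_sqrt_exists.
Qed.

Lemma pd_det_gt0 p (S : 'M[R]_p) : pd S -> 0 < \det S.
Proof.
move=> S_pd; have := pd_unitmx S_pd; rewrite unitmxE unitfE lt_def => ->.
by have [_ <-] := sqrtmP (pd_psd S_pd); rewrite det_mulmx -expr2 sqr_ge0.
Qed.

Lemma unitmx_add1_mul_psd p (S C : 'M[R]_p) : psd S -> psd C ->
  1%:M + S *m C \in unitmx.
Proof.
move=> S_psd C_psd; have [[X_sym _] <-] := sqrtmP S_psd; set X := sqrtm S in X_sym *.
have XCX_unit := unitmx_add1_psd (psd_sym_conj X_sym C_psd).
(* A left kernel vector [u] of [1 + X X C] gives the left kernel vector [u X] of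
   the invertible [1 + X C X]. *)
rewrite unitmxE unitfE; apply/negP => /det0P[u u_neq0].
rewrite mulmxDr mulmx1 => /eqP; rewrite addr_eq0 => /eqP uE.
have uX0 : u *m X = 0.
  rewrite -(mulmxK XCX_unit (u *m X)) mulmxDr mulmx1 {1}uE mulNmx !mulmxA.
  by rewrite addNr mul0mx.
by move: u_neq0; rewrite uE !mulmxA uX0 !mul0mx oppr0 eqxx.
Qed.

Lemma psd_mul_self p (X : 'M[R]_p) : psd X -> psd (X *m X).
Proof.
by case=> X_sym _; rewrite -{1}[X]mulmx1; exact: psd_sym_conj (pd_psd (pd1 _)).
Qed.

Lemma mul_invmx_add1_conj p (X C : 'M[R]_p) : psd X -> psd C ->
  X *m invmx (1%:M + X *m C *m X) *m X = invmx (1%:M + X *m X *m C) *m (X *m X).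
Proof.
move=> X_psd C_psd; have N_unit := unitmx_add1_psd (psd_sym_conj X_psd.1 C_psd).
have M_unit := unitmx_add1_mul_psd (psd_mul_self X_psd) C_psd.
have intertwine : (1%:M + X *m X *m C) *m X = X *m (1%:M + X *m C *m X).
  by rewrite mulmxDl mulmxDr mul1mx mulmx1 !mulmxA.
have -> : X *m invmx (1%:M + X *m C *m X) = invmx (1%:M + X *m X *m C) *m X.
  by apply: (canRL (mulKmx M_unit)); rewrite mulmxA intertwine mulmxK.
by rewrite mulmxA.
Qed.

Lemma psd_riccati_update p q (P : 'M[R]_p) (G : 'M[R]_(p, q)) (M : 'M[R]_q) :
  psd P -> pd M -> psd (P - P *m G *m invmx (G^T *m P *m G + M) *m G^T *m P).
Proof.
move=> P_psd M_pd; have [P_sym _] := P_psd.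
set N := G^T *m P *m G + M; set Z := P *m G *m invmx N *m G^T *m P.
have N_pd : pd N by rewrite /N addrC; apply: pdD => //; exact: psd_congruence.
have N_unit := pd_unitmx N_pd.
have NV_sym : (invmx N)^T = invmx N by rewrite trmx_inv N_pd.1.
set Q := invmx N *m G^T *m P; set Y := G *m Q.
have QT : Q^T = P *m G *m invmx N by rewrite !trmx_mul trmxK P_sym NV_sym mulmxA.
have PY : P *m Y = Z by rewrite /Y /Q !mulmxA.
have YTP : Y^T *m P = Z by rewrite trmx_mul QT.
have QMQ : Q^T *m M *m Q = Z - Y^T *m P *m Y.
  have -> : M = N - G^T *m P *m G by rewrite /N addrC addKr.
  by rewrite mulmxBr mulmxBl QT mulmxKV // /Y trmx_mul QT !mulmxA.
have -> : P - Z = (1%:M - Y)^T *m P *m (1%:M - Y) + Q^T *m M *m Q.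
  rewrite QMQ [(1%:M - Y)^T]linearB /= tr_scalar_mx mulmxBr mulmx1 !mulmxBl !mul1mx.
  by rewrite YTP PY subrK.
by apply: psdD; apply: psd_congruence => //; exact: pd_psd.
Qed.
End Psd.

Lemma at_nat_ord T (X : Type) (f : 'I_T -> X) (d : X) (i : 'I_T) : at_nat f d i = f i.
Proof. by rewrite /at_nat valK. Qed.

Lemma at_nat_psd (R : realType) p T (f : 'I_T -> 'M[R]_p) k :
  (forall i, psd (f i)) -> psd (at_nat f 0 k).
Proof.
move=> f_psd; rewrite /at_nat.
by case: insubP => [i _ _|_] /=; [exact: f_psd | exact: psd0].
Qed.

Section Riccati.
Variables (R : realType) (n m T : nat) (eps : R).
Variables (A : 'I_T -> 'M[R]_n) (B : 'I_T -> 'M[R]_(n, m)) (Rk : 'I_T -> 'M[R]_m).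
Hypotheses (eps_gt0 : 0 < eps) (Rk_pd : forall k, pd (Rk k)).

Local Notation A_ := (at_nat A 0).
Local Notation B_ := (at_nat B 0).
Local Notation R_ := (at_nat Rk 0).
Local Notation C := (Cmat eps B Rk).

Lemma Cmat_psd k P : psd P -> psd (C k P).
Proof.
move=> P_psd; apply: psdZ; first by rewrite invr_ge0 ltW.
by apply: psdD; [apply: at_nat_psd => i; exact: pd_psd | exact: psd_congruence].
Qed.

Lemma Pi_stepE Srho k P : psd (at_nat Srho 0 k) -> psd P ->
  Pi_step eps A B Rk Srho k P =
  (A_ k)^T *m P *m A_ k - eps^-1 *: ((A_ k)^T *m P *m B_ k
    *m (invmx (1%:M + at_nat Srho 0 k *m C k P) *m at_nat Srho 0 k)
    *m (B_ k)^T *m P *m A_ k).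
Proof.
move=> /sqrtmP[S_psd SS] P_psd; rewrite /Pi_step; congr (_ - _ *: _).
by rewrite -[in RHS]SS -(mul_invmx_add1_conj S_psd (Cmat_psd k P_psd)) !mulmxA.
Qed.

Lemma Pi_step_psd Srho k P : psd (at_nat Srho 0 k) -> psd P ->
  psd (Pi_step eps A B Rk Srho k P).
Proof.
move=> /sqrtmP[S_psd _] P_psd; have [S_sym _] := S_psd.
rewrite /Pi_step; set S := sqrtm _ in S_psd S_sym *.
set G := B_ k *m S; set M := S *m R_ k *m S + eps%:M.
have M_pd : pd M.
  rewrite /M addrC -scalemx1; apply: pdD; first exact/pdZ/pd1.
  by apply: psd_sym_conj S_sym _; apply: at_nat_psd => i; exact: pd_psd.
have N_unit := unitmx_add1_psd (psd_sym_conj S_sym (Cmat_psd k P_psd)).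
have epsN : eps *: (1%:M + S *m C k P *m S) = G^T *m P *m G + M.
  rewrite /Cmat scalerDr scalemx1 -scalemxAr -scalemxAl scalerA mulfV ?gt_eqF //.
  rewrite scale1r mulmxDr mulmxDl /G trmx_mul S_sym !mulmxA addrC addrA.
  by rewrite (addrC (S *m R_ k *m S)).
have -> : (A_ k)^T *m P *m A_ k - eps^-1 *: ((A_ k)^T *m P *m B_ k *m S
      *m invmx (1%:M + S *m C k P *m S) *m S *m (B_ k)^T *m P *m A_ k)
    = (A_ k)^T *m (P - P *m G *m invmx (G^T *m P *m G + M) *m G^T *m P) *m A_ k.
  rewrite -epsN invmxZ ?unitmxZ ?unitfE ?gt_eqF // mulmxBr mulmxBl /G trmx_mul S_sym.
  by rewrite -?scalemxAr -?scalemxAl -?scalemxAr -?scalemxAl !mulmxA.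
exact/psd_congruence/psd_riccati_update.
Qed.

Lemma Pi_rev_psd F Srho j : psd F -> (forall k, psd (Srho k)) ->
  psd (Pi_rev eps A B Rk F Srho j).
Proof.
move=> F_psd Srho_psd; elim: j => [|j IHj] //=.
by apply: Pi_step_psd => //; exact: at_nat_psd.
Qed.

End Riccati.

Import numFieldNormedType.Exports.
Local Open Scope classical_set_scope.

Section MatrixLimits.
Variables (R : numFieldType) (U : Type) (F : set_system U).
Context {F_filter : Filter F}.

Lemma cvg_mxP p q (f : U -> 'M[R]_(p, q)) (a : 'M[R]_(p, q)) :
  f @ F --> a <-> forall i j, f x i j @[x --> F] --> a i j.
Proof.
split=> [fa i j|fa]; first exact: cvg_comp fa (@coord_continuous R p q i j a).
move=> V /= [W nW WV]; apply: (filterS WV).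
by apply: filter_forall => i; apply: filter_forall => j; exact: fa.
Qed.

Lemma cvg_mulmx p q r (f : U -> 'M[R]_(p, q)) (g : U -> 'M[R]_(q, r))
    (a : 'M[R]_(p, q)) (b : 'M[R]_(q, r)) :
  f @ F --> a -> g @ F --> b -> f x *m g x @[x --> F] --> a *m b.
Proof.
move=> /cvg_mxP fa /cvg_mxP gb; apply/cvg_mxP => i j.
rewrite mxE; under eq_fun do rewrite mxE.
by apply: (cvg_big add_continuous) => k _; exact: cvgM (fa i k) (gb k j).
Qed.

Lemma cvg_mulmxLR p q r s (M : 'M[R]_(p, q)) (f : U -> 'M[R]_(q, r))
    (N : 'M[R]_(r, s)) (a : 'M[R]_(q, r)) :
  f @ F --> a -> M *m f x *m N @[x --> F] --> M *m a *m N.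
Proof.
by move=> fa; apply: cvg_mulmx (cvg_cst _); apply: cvg_mulmx fa; exact: cvg_cst.
Qed.

Lemma cvg_det p (f : U -> 'M[R]_p) (a : 'M[R]_p) :
  f @ F --> a -> \det (f x) @[x --> F] --> \det a.
Proof.
move/cvg_mxP => fa; apply: (cvg_big add_continuous) => s _.
by apply: cvgM; [exact: cvg_cst | apply: (cvg_big mul_continuous) => i _; exact: fa].
Qed.

Lemma cvg_trace p (f : U -> 'M[R]_p) (a : 'M[R]_p) :
  f @ F --> a -> \tr (f x) @[x --> F] --> \tr a.
Proof. by move/cvg_mxP => fa; apply: (cvg_big add_continuous) => i _; exact: fa. Qed.

Lemma cvg_adj p (f : U -> 'M[R]_p) (a : 'M[R]_p) :
  f @ F --> a -> \adj (f x) @[x --> F] --> \adj a.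
Proof.
move/cvg_mxP => fa; apply/cvg_mxP => i j; rewrite mxE; under eq_fun do rewrite mxE.
apply: cvgM; first exact: cvg_cst.
apply: cvg_det; apply/cvg_mxP => k l; rewrite !mxE; under eq_fun do rewrite !mxE.
exact: fa.
Qed.

Lemma cvg_invmx p (f : U -> 'M[R]_p) (a : 'M[R]_p) : a \in unitmx ->
  f @ F --> a -> invmx (f x) @[x --> F] --> invmx a.
Proof.
move=> a_unit fa; have det_a : \det a != 0 by rewrite -unitfE -unitmxE.
have det_f := cvg_det fa.
have near_unit : \forall x \near F, f x \in unitmx.
  by near do rewrite unitmxE unitfE; exact: cvgr_neq0 det_f det_a.
rewrite {2}/invmx a_unit; apply: cvg_trans (cvgZ (cvgV det_a det_f) (cvg_adj fa)).
by apply: near_eq_cvg; near do rewrite /invmx ifT //.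
Unshelve. all: by end_near.
Qed.

End MatrixLimits.

Lemma continuous_near_eq (X Y : topologicalType) (x0 : X) (f g : X -> Y) :
  (\forall x \near x0, f x = g x) -> {for x0, continuous g} -> {for x0, continuous f}.
Proof.
move=> fg cg; rewrite /prop_for /continuous_at (nbhs_singleton fg).
by apply: cvg_trans cg; apply: near_eq_cvg; apply: filterS fg => x ->.
Qed.

Section JcheckContinuity.
Variables (R : realType) (n m T : nat) (eps : R).
Variables (A : 'I_T -> 'M[R]_n) (B : 'I_T -> 'M[R]_(n, m)) (Rk : 'I_T -> 'M[R]_m).
Variables (Sw : 'I_T -> 'M[R]_n) (F Sx : 'M[R]_n).
Hypotheses (eps_gt0 : 0 < eps) (Rk_pd : forall k, pd (Rk k)) (F_psd : psd F).

Local Notation MTs := (@MT R T m).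
Local Notation X := (subspace MTs).
Local Notation Sr x k := (at_nat x 0 k).
Local Notation Pi_ x k := (Pi eps A B Rk F x k).
Local Notation SQ x k := (SigmaQ eps A B Rk F x k).

Variable x0 : X.
Hypothesis MT_x0 : MTs x0.

(* Instance search does not see through the [subspace] alias. *)
#[local] Instance nbhs_x0_filter : Filter (nbhs_subspace x0) := subspace_filter x0.

Let near_MT : \forall x \near x0, MTs x.
Proof.
have := near_withinT MTs (nbhs_filter (x0 : {ptws 'I_T -> 'M[R]_m})).
by rewrite nbhs_subspace_in.
Qed.

Lemma continuous_at_nat k : {for x0, continuous (fun x : X => Sr x k)}.
Proof.
rewrite /at_nat; case: insubP => [i _ _|_] /=; last exact: cvg_cst.
have proj_i : continuous (fun x : {ptws 'I_T -> 'M[R]_m} => x i).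
  exact: proj_continuous.
by have := continuous_subspaceT (A := MTs) proj_i; apply.
Qed.

Lemma continuous_Pi_rev j : {for x0, continuous (fun x : X => Pi_rev eps A B Rk F x j)}.
Proof.
elim: j => [|j IHj] /=; first exact: cvg_cst.
set k := (T - j.+1)%N; set P := fun x : X => Pi_rev eps A B Rk F x j.
have P_psd x : MTs x -> psd (P x) by move=> MTx; exact: Pi_rev_psd.
apply: continuous_near_eq.
  near=> x; have MTx : MTs x by near: x.
  by apply: Pi_stepE => //; [exact: at_nat_psd | exact: P_psd].
have Sk := @continuous_at_nat k.
have N_unit : 1%:M + Sr x0 k *m Cmat eps B Rk k (P x0) \in unitmx.
  by apply: unitmx_add1_mul_psd; [exact: at_nat_psd | exact/Cmat_psd/P_psd].
have PLR p q (M : 'M[R]_(p, n)) (N : 'M[R]_(n, q)) :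
    M *m P x *m N @[x --> x0] --> M *m P x0 *m N.
  by apply: cvg_mulmxLR; exact: IHj.
have CP : Cmat eps B Rk k (P x) @[x --> x0] --> Cmat eps B Rk k (P x0).
  by rewrite /Cmat; apply: cvgZ (cvg_cst _) (cvgD (cvg_cst _) (PLR _ _ _ _)).
have G : invmx (1%:M + Sr x k *m Cmat eps B Rk k (P x)) *m Sr x k @[x --> x0] -->
    invmx (1%:M + Sr x0 k *m Cmat eps B Rk k (P x0)) *m Sr x0 k.
  apply: cvg_mulmx; last exact: Sk.
  by apply: cvg_invmx N_unit _; apply: cvgD; [exact: cvg_cst | exact: cvg_mulmx Sk CP].
apply: cvgB; first exact: PLR.
apply: cvgZ; first exact: cvg_cst.
apply: cvg_mulmx; last exact: cvg_cst.
apply: cvg_mulmx; last exact: IHj.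
apply: cvg_mulmx; last exact: cvg_cst.
by apply: cvg_mulmx G; exact: PLR.
Unshelve. all: by end_near.
Qed.

Lemma continuous_Jcheck : {for x0, continuous (Jcheck eps A B Rk Sw F Sx : X -> R)}.
Proof.
have Pi_cvg k : Pi_ x k @[x --> x0] --> Pi_ x0 k by exact: continuous_Pi_rev.
have N_pd (k : 'I_T) :
    pd (at_nat Rk 0 k + (at_nat B 0 k)^T *m Pi_ x0 k.+1 *m at_nat B 0 k).
  by rewrite at_nat_ord; apply: pdD => //; apply/psd_congruence/Pi_rev_psd.
have SQ_pd (k : 'I_T) : pd (SQ x0 k) by exact/pdZ/pd_invmx.
have SQ_cvg (k : 'I_T) : SQ x k @[x --> x0] --> SQ x0 k.
  apply: cvgZ; first exact: cvg_cst.
  apply: cvg_invmx; first exact: pd_unitmx.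
  by apply: cvgD; [exact: cvg_cst | apply: cvg_mulmxLR].
rewrite /prop_for /continuous_at /Jcheck /Jcheck_val.
apply: cvgM; first exact: cvg_cst.
have trace_cvg k (W : 'M[R]_n) : \tr (Pi_ x k *m W) @[x --> x0] --> \tr (Pi_ x0 k *m W).
  by apply: cvg_trace; apply: cvg_mulmx; [exact: Pi_cvg | exact: cvg_cst].
apply: cvgD; first exact: trace_cvg.
apply: (cvg_big add_continuous) => k _.
apply: cvgD; last exact: trace_cvg.
apply: cvgM; first exact: cvg_cst.
have Sr_SQ_pd : pd (Sr x0 k + SQ x0 k).
  by rewrite addrC; apply: pdD => //; exact: at_nat_psd.
have ratio_gt0 : 0 < \det (Sr x0 k + SQ x0 k) / \det (SQ x0 k).
  by rewrite divr_gt0 ?pd_det_gt0.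
apply: continuous_cvg; first exact: continuous_ln ratio_gt0.
apply: cvgM.
  by apply: cvg_det; apply: cvgD; [exact: continuous_at_nat | exact: SQ_cvg].
by apply: cvgV; [rewrite gt_eqF ?pd_det_gt0 | apply: cvg_det].
Qed.

End JcheckContinuity.

Theorem lemma3 (R : realType) (n m T : nat) (eps : R)
  (A : 'I_T -> 'M[R]_n) (B : 'I_T -> 'M[R]_(n, m))
  (Rk : 'I_T -> 'M[R]_m) (Sw : 'I_T -> 'M[R]_n) (F Sx : 'M[R]_n) :
  (1 <= n)%N -> (1 <= m)%N -> (1 <= T)%N -> 0 < eps ->
  (forall k, pd (Rk k)) -> (forall k, pd (Sw k)) -> pd F -> pd Sx ->
  {within @MT R T m, continuous (Jcheck eps A B Rk Sw F Sx)}.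
Proof.
move=> _ _ _ eps_gt0 Rk_pd _ F_pd _.
rewrite continuous_subspace_in => x0; rewrite in_setE => MT_x0.
exact (continuous_Jcheck eps_gt0 Rk_pd (pd_psd F_pd) MT_x0).
Qed.
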